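(* Let $\mathcal{T}$ be a nilpotent Lie triple system of dimension $3$ over a field $\mathbb{F}$ of characteristic different from $2$. Then $\mathcal{T}$ is isomorphic to exactly one of: $\mathcal{T}_{3,1}$, the abelian Lie triple system (all products zero); or $\mathcal{T}_{3,2}$, with basis $e_1,e_2,e_3$ and nonzero products $[e_1,e_2,e_1]=e_3$, $[e_2,e_1,e_1]=-e_3$. *)

From HB Require Import structures.
From mathcomp Require Import all_boot all_order all_algebra.
Set Implicit Arguments. Unset Strict Implicit. Unset Printing Implicit Defensive.
Import GRing.Theory.
Local Open Scope ring_scope.

Definition triprod (F : fieldType) (V : vectType F) := V -> V -> V -> V.

Section LTS.
Variables (F : fieldType) (V : vectType F).

Definition trilinear (p : triprod V) : Prop :=
  [/\ forall (a : F) x x' y z, p (a *: x + x') y z = a *: p x y z + p x' y z,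
      forall (a : F) x y y' z, p x (a *: y + y') z = a *: p x y z + p x y' z
    & forall (a : F) x y z z', p x y (a *: z + z') = a *: p x y z + p x y z'].

Definition is_LTS (p : triprod V) : Prop :=
  [/\ trilinear p,
      forall x z, p x x z = 0,
      forall x y z, p x y z + p y z x + p z x y = 0
    & forall u v x y z,
        p u v (p x y z) = p (p u v x) y z + p x (p u v y) z + p x y (p u v z)].

(* Lower central series: lcs p 0 = T, lcs p (k+1) = span [lcs p k, T, T],
   the span being the smallest subspace containing all such products. *)
Fixpoint lcs (p : triprod V) (k : nat) : V -> Prop :=
  match k with
  | 0 => fun _ => True
  | k'.+1 => fun w => forall U : {vspace V},
      (forall a b c, lcs p k' a -> p a b c \in U) -> w \in U
  end.

Definition nilpotent_LTS (p : triprod V) : Prop :=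
  exists n, forall w, lcs p n w -> w = 0.

End LTS.

Definition LTS_iso (F : fieldType) (V W : vectType F)
  (p : triprod V) (q : triprod W) : Prop :=
  exists f : V -> W,
    [/\ forall (a : F) x y, f (a *: x + y) = a *: f x + f y,
        bijective f
      & forall x y z, f (p x y z) = q (f x) (f y) (f z)].

(* Standard basis of F^3 (row vectors); e_1,e_2,e_3 are indices 0,1,2. *)
Definition i1 : 'I_3 := Ordinal (isT : (0 < 3)%N).
Definition i2 : 'I_3 := Ordinal (isT : (1 < 3)%N).
Definition i3 : 'I_3 := Ordinal (isT : (2 < 3)%N).
Definition ebasis (F : fieldType) (i : 'I_3) : 'rV[F]_3 := delta_mx 0 i.

Definition T31 (F : fieldType) : triprod 'rV[F]_3 := fun _ _ _ => 0.

(* T_{3,2}: the trilinear extension of [e1,e2,e1] = e3, [e2,e1,e1] = -e3,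
   all other products of basis vectors zero. *)
Definition T32 (F : fieldType) : triprod 'rV[F]_3 := fun x y z =>
  ((x 0 i1 * y 0 i2 - x 0 i2 * y 0 i1) * z 0 i1) *: ebasis F i3.

From HB Require Import structures.
From mathcomp Require Import all_boot all_order all_algebra ring.
Import GRing.Theory.
Local Open Scope ring_scope.
Set Implicit Arguments. Unset Strict Implicit.

(* Let W = [V,V,V].  Since p x x z = 0 and p is skew in its first two
   arguments, V = A + F x gives [V,V,V] <= [A,V,V].  In a nilpotent system a
   subspace A with A <= [A,V,V] is 0, so W cannot have codimension at most 1;
   in dimension 3 this leaves dim W <= 1.  If W = 0 the system is abelian.
   If W = F e, nilpotency makes [W,V,V] a proper subspace of W, hence 0, so e
   annihilates everything.  Completing e to a basis x, y, e, all products are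
   determined by [x,y,x] = a e and [x,y,y] = b e: they vanish when a = b = 0,
   and otherwise the basis x, y - (b/a) x, a e (after exchanging x and y if
   a = 0) has the multiplication table of T_{3,2}.  The two models are told
   apart by T_{3,1} being abelian and T_{3,2} not. *)

Section Multilinear.
Variables (F : fieldType) (V M : vectType F).

Lemma linear_span_memv (g : V -> M) (U : {vspace M}) (X : seq V) :
  linear g -> {in X, forall x, g x \in U} -> {in <<X>>%VS, forall v, g v \in U}.
Proof.
move=> lin_g gXU.
pose G := linfun (HB.pack g (GRing.isLinear.Build F V M *:%R g lin_g)
                  : {linear V -> M}).
suff /subvP sXU : (<<X>> <= G @^-1: U)%VS by move=> v /sXU; rewrite -memv_preim lfunE.
by apply/span_subvP => x /gXU; rewrite -memv_preim lfunE.
Qed.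

Definition trilinear_map (g : V -> V -> V -> M) : Prop :=
  [/\ forall y z, linear (fun x => g x y z), forall x z, linear (fun y => g x y z)
    & forall x y, linear (g x y)].

Lemma trilinear_span_memv (g : V -> V -> V -> M) (U : {vspace M}) (X Y Z : seq V) :
  trilinear_map g ->
  (forall x y z, x \in X -> y \in Y -> z \in Z -> g x y z \in U) ->
  forall x y z, x \in <<X>>%VS -> y \in <<Y>>%VS -> z \in <<Z>>%VS -> g x y z \in U.
Proof.
case=> g1 g2 g3 gXYZ x y z Xx Yy Zz.
apply: (linear_span_memv (g1 y z) _ Xx) => x' Xx'.
apply: (linear_span_memv (g2 x' z) _ Yy) => y' Yy'.
apply: (linear_span_memv (g3 x' y') _ Zz) => z' Zz'.
exact: gXYZ.
Qed.

End Multilinear.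

Section Coordinates.
Variables (F : fieldType) (V : vectType F) (n : nat) (X : n.-tuple V).

Definition coords (v : V) : 'rV[F]_n := \row_i coord X i v.

Lemma coords_linear : linear coords.
Proof. by move=> a u v; apply/rowP => i; rewrite !mxE linearP. Qed.
HB.instance Definition _ :=
  GRing.isSemilinear.Build F V _ _ coords (GRing.semilinear_linear coords_linear).

Hypothesis Xb : basis_of fullv X.

Lemma coords_bij : bijective coords.
Proof.
have Xfree := basis_free Xb.
exists (fun r : 'rV[F]_n => \sum_i r 0 i *: X`_i) => [v|r].
  by rewrite [RHS](coord_basis Xb (memvf v)); apply: eq_bigr => i _; rewrite mxE.
by apply/rowP => j; rewrite mxE coord_sum_free.
Qed.

Lemma coords_basis (i : 'I_n) : coords X`_i = delta_mx 0 i.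
Proof. by apply/rowP => j; rewrite !mxE coord_free ?(basis_free Xb) // eq_sym. Qed.

Lemma LTS_iso_basis (p : triprod V) (q : triprod 'rV[F]_n) :
  trilinear p -> trilinear q ->
  (forall i j k : 'I_n,
     coords (p X`_i X`_j X`_k) = q (delta_mx 0 i) (delta_mx 0 j) (delta_mx 0 k)) ->
  LTS_iso p q.
Proof.
case=> p1 p2 p3 [q1 q2 q3] pq.
exists coords; split; [exact: coords_linear | exact: coords_bij |].
pose g x y z := coords (p x y z) - q (coords x) (coords y) (coords z).
have g_tri : trilinear_map g.
  by split=> [y z|x z|x y] a u v;
    rewrite /g ?p1 ?p2 ?p3 !linearP ?q1 ?q2 ?q3 scalerBr addrACA opprD.
have Xsp v : v \in <<X>>%VS by rewrite (span_basis Xb) memvf.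
move=> x y z; apply/eqP; rewrite -subr_eq0 -memv0.
apply: (trilinear_span_memv g_tri _ (Xsp x) (Xsp y) (Xsp z)) => u v w.
move=> /tnthP[i ->] /tnthP[j ->] /tnthP[k ->].
by rewrite /g !(tnth_nth 0) pq !coords_basis subrr memv0.
Qed.

End Coordinates.

Section TripleSystem.
Variables (F : fieldType) (V : vectType F) (p : triprod V).
Hypothesis tri : trilinear p.

Lemma triprod_trilinear_map : trilinear_map p.
Proof.
by case: tri => p1 p2 p3; split=> [y z|x z|x y] a u v; [apply: p1 | apply: p2 | apply: p3].
Qed.

Lemma trilD1 x x' y z : p (x + x') y z = p x y z + p x' y z.
Proof. by case: tri => p1 _ _; have := p1 1 x x' y z; rewrite !scale1r. Qed.

Lemma trilD2 x y y' z : p x (y + y') z = p x y z + p x y' z.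
Proof. by case: tri => _ p2 _; have := p2 1 x y y' z; rewrite !scale1r. Qed.

Lemma trilZ1 a x y z : p (a *: x) y z = a *: p x y z.
Proof. by case: triprod_trilinear_map => p1 _ _; exact: (GRing.scalable_linear (p1 y z)). Qed.

(* [bracket A] is [A, V, V]. *)
Definition bracket (A : {vspace V}) : {vspace V} :=
  <<[seq p a bc.1 bc.2 | a <- vbasis A,
                          bc <- [seq (b, c) | b <- vbasis fullv, c <- vbasis fullv]]>>%VS.

Lemma bracket_min (A U : {vspace V}) :
  (forall a b c, a \in A -> p a b c \in U) -> (bracket A <= U)%VS.
Proof.
move=> AU; apply/span_subvP => _ /allpairsP[[a [b c]] [/vbasis_mem Aa _ ->]].
exact: AU.
Qed.

Lemma memv_bracket (A : {vspace V}) a b c : a \in A -> p a b c \in bracket A.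
Proof.
move=> Aa; have span_vbasis (U : {vspace V}) : <<vbasis U>>%VS = U.
  exact/span_basis/vbasisP.
apply: (trilinear_span_memv triprod_trilinear_map _
          (X := vbasis A) (Y := vbasis fullv) (Z := vbasis fullv)).
all: rewrite ?span_vbasis ?memvf // => a' b' c' Aa' b'V c'V.
apply: memv_span.
exact: (allpairs_f (fun a bc => p a bc.1 bc.2) Aa' (allpairs_f pair b'V c'V)).
Qed.

Lemma bracketS (A B : {vspace V}) : (A <= B)%VS -> (bracket A <= bracket B)%VS.
Proof. by move=> /subvP sAB; apply: bracket_min => a b c /sAB /memv_bracket. Qed.

Definition lcsv (k : nat) : {vspace V} := iter k bracket fullv.

Lemma lcsvP k w : lcs p k w <-> w \in lcsv k.
Proof.
elim: k w => [|k IH] w; first by split=> // _; exact: memvf.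
split=> [lcs_w | w_in U lcsU].
  by apply: lcs_w => a b c /IH /memv_bracket.
by apply: (subvP (bracket_min _)) w_in => a b c /IH; apply: lcsU.
Qed.

End TripleSystem.

Section NilpotentLTS.
Variables (F : fieldType) (V : vectType F) (p : triprod V).
Hypotheses (tri : trilinear p) (alt : forall x z, p x x z = 0).
Hypothesis jacobi : forall x y z, p x y z + p y z x + p z x y = 0.
Hypothesis nil : nilpotent_LTS p.

Local Notation bracket := (bracket p).

Lemma triprod_skew x y z : p y x z = - p x y z.
Proof.
apply/eqP; rewrite -addr_eq0 addrC.
by have := alt (x + y) z; rewrite (trilD1 tri) !(trilD2 tri) !alt add0r addr0 => ->.
Qed.

Lemma annihilator_mid e : (forall u v, p e u v = 0) -> forall u v, p u e v = 0.
Proof. by move=> eA u v; rewrite triprod_skew eA oppr0. Qed.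

Lemma annihilator_right e : (forall u v, p e u v = 0) -> forall u v, p u v e = 0.
Proof. by move=> eA u v; have := jacobi u v e; rewrite eA (annihilator_mid eA) !addr0. Qed.

Lemma bracket_stable_eq0 (A : {vspace V}) : (A <= bracket A)%VS -> A = 0%VS.
Proof.
move=> sAbA; have [n lcs_n0] := nil.
suff sA_lcsv : forall k, (A <= lcsv p k)%VS.
  apply/eqP; rewrite -subv0; apply/subvP => w.
  by move=> /(subvP (sA_lcsv n)) /(lcsvP tri) /lcs_n0 ->; exact: mem0v.
elim=> [|k IH]; first exact: subvf.
exact: subv_trans sAbA (bracketS tri IH).
Qed.

Lemma bracket_proper (A : {vspace V}) :
  A != 0%VS -> (bracket A <= A)%VS -> (\dim (bracket A) < \dim A)%N.
Proof.
move=> nzA sbAA; rewrite (ltn_leqif (dimv_leqif_sup sbAA)).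
by apply/negP => /bracket_stable_eq0 A0; rewrite A0 eqxx in nzA.
Qed.

Lemma bracket_codim1 (A : {vspace V}) x :
  (fullv <= A + <[x]>)%VS -> (bracket fullv <= bracket A)%VS.
Proof.
move=> /subvP sVAx; apply: bracket_min => a b c _.
have [a' Aa' [_ /vlineP[s ->] ->]] := memv_addP (sVAx a (memvf a)).
have [b' Ab' [_ /vlineP[t ->] ->]] := memv_addP (sVAx b (memvf b)).
case: (tri) => p1 p2 _; rewrite [a' + _]addrC [b' + _]addrC p1 p2 alt scaler0 add0r.
rewrite triprod_skew scalerN; apply: memvD; last exact: (memv_bracket tri _ _ Aa').
by rewrite memvN memvZ ?(memv_bracket tri _ _ Ab').
Qed.

Lemma dimv_le1_vline (U : {vspace V}) : (\dim U <= 1)%N -> (U <= <[vpick U]>)%VS.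
Proof.
have [-> | nzU] := eqVneq U 0%VS; first by rewrite sub0v.
have sxU : (<[vpick U]> <= U)%VS by rewrite -memvE memv_pick.
by rewrite -(geq_leqif (dimv_leqif_sup sxU)) dim_vline vpick0 nzU.
Qed.

Lemma bracket_fullv_codim1_eq0 :
  (\dim {:V} <= (\dim (bracket fullv)).+1)%N -> bracket fullv = 0%VS.
Proof.
set W := bracket fullv => dimVW; apply: bracket_stable_eq0.
apply: (bracket_codim1 (x := vpick W^C)); rewrite -{1}(addv_complf W) addvS //.
by apply: dimv_le1_vline; rewrite dimv_compl leq_subLR addn1.
Qed.

End NilpotentLTS.

Definition abelian_TS (F : fieldType) (V : vectType F) (p : triprod V) : Prop :=
  forall x y z, p x y z = 0.

Lemma LTS_iso_abelian (F : fieldType) (V W : vectType F) (p : triprod V) (q : triprod W) :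
  LTS_iso p q -> abelian_TS p <-> abelian_TS q.
Proof.
case=> f [f_lin [g fK gK] f_hom].
have f0 : f 0 = 0 by have := f_lin (-1) 0 0; rewrite scaler0 addr0 scaleN1r addNr.
split=> [p0 x y z | q0 x y z].
  by rewrite -[x]gK -[y]gK -[z]gK -f_hom p0 f0.
by apply: (can_inj fK); rewrite f_hom q0 f0.
Qed.

Section ThreeDimensionalModels.
Variable F : fieldType.

Lemma T32_trilinear : trilinear (@T32 F).
Proof. by split=> *; rewrite /T32 !mxE scalerA -scalerDl; congr (_ *: _); ring. Qed.

Lemma T32_nonabelian : ~ abelian_TS (@T32 F).
Proof.
move=> /(_ (ebasis F i1) (ebasis F i2) (ebasis F i1)).
move=> /(congr1 (fun r : 'rV[F]_3 => r 0 i3)).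
by rewrite /T32 /ebasis !mxE /= !(mulr1, mulr0, subr0) => /eqP; rewrite oner_eq0.
Qed.

Lemma abelian_iso_T31 (V : vectType F) (p : triprod V) :
  \dim {:V} = 3 -> abelian_TS p -> LTS_iso p (@T31 F).
Proof.
move=> dimV p0; have sz3 : size (vbasis {:V}) == 3 by rewrite size_tuple dimV.
exists (coords (Tuple sz3)); split; [exact: coords_linear | exact/coords_bij/vbasisP |].
by move=> x y z; rewrite p0 linear0.
Qed.

End ThreeDimensionalModels.

Section Dimension3.
Variables (F : fieldType) (V : vectType F) (p : triprod V).
Hypotheses (tri : trilinear p) (alt : forall x z, p x x z = 0).
Hypothesis jacobi : forall x y z, p x y z + p y z x + p z x y = 0.
Hypothesis dimV : \dim {:V} = 3.

Lemma T32_of_basis x y e :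
  (fullv <= <<[:: x; y; e]>>)%VS -> (forall u v, p e u v = 0) ->
  p x y x = e -> p x y y = 0 -> LTS_iso p (@T32 F).
Proof.
move=> span_xye eA pxyx pxyy; pose X := [tuple x; y; e].
have Xb : basis_of fullv X by rewrite basisEdim span_xye size_tuple dimV.
have eB := annihilator_mid tri alt eA; have eC := annihilator_right tri alt jacobi eA.
have pyxx : p y x x = - e by rewrite (triprod_skew tri alt) pxyx.
have pyxy : p y x y = 0 by rewrite (triprod_skew tri alt) pxyy oppr0.
have ce : coords X e = delta_mx 0 i3 := coords_basis Xb i3.
apply: (LTS_iso_basis Xb tri (@T32_trilinear F)) => i j k.
case: i => [[|[|[|//]]] ?]; case: j => [[|[|[|//]]] ?]; case: k => [[|[|[|//]]] ?];
  rewrite /= ?alt ?eA ?eB ?eC ?pxyx ?pxyy ?pyxx ?pyxy ?linear0 ?linearN /= ?ce;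
  rewrite /T32 /ebasis !mxE /=;
  by rewrite ?(mul0r, mulr0, mulr1, subr0, sub0r, oppr0, scale0r, scale1r, scaleN1r).
Qed.

Lemma T32_of_span x y e a b :
  (fullv <= <<[:: x; y; e]>>)%VS -> (forall u v, p e u v = 0) ->
  p x y x = a *: e -> p x y y = b *: e -> a != 0 -> LTS_iso p (@T32 F).
Proof.
move=> span_xye eA pxyx pxyy nz_a; case: (tri) => _ p2 p3.
pose y' := (- (b / a)) *: x + y.
apply: (T32_of_basis (x := x) (y := y') (e := a *: e)).
- apply: subv_trans span_xye _; apply/span_subvP => v.
  have span_y'e v' : v' \in [:: x; y'; a *: e] -> v' \in <<[:: x; y'; a *: e]>>%VS.
    exact: memv_span.
  rewrite !inE => /or3P[] /eqP ->.
  + by apply: span_y'e; rewrite inE eqxx.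
  + have -> : y = (b / a) *: x + y' by rewrite /y' scaleNr addNKr.
    by apply: memvD; [apply: memvZ |]; apply: span_y'e; rewrite !inE eqxx ?orbT.
  + rewrite -[X in X \in _](scalerK nz_a); apply: memvZ.
    by apply: span_y'e; rewrite !inE eqxx !orbT.
- by move=> u v; rewrite (trilZ1 tri) eA scaler0.
- by rewrite p2 alt scaler0 add0r.
- rewrite p2 alt scaler0 add0r p3 pxyx pxyy scalerA -scalerDl.
  by rewrite mulNr divfK // addNr scale0r.
Qed.

Lemma abelian_of_span x y e :
  (fullv <= <<[:: x; y; e]>>)%VS -> (forall u v, p e u v = 0) ->
  p x y x = 0 -> p x y y = 0 -> abelian_TS p.
Proof.
move=> /subvP span_xye eA pxyx pxyy u v w; apply/eqP; rewrite -memv0.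
have eB := annihilator_mid tri alt eA; have eC := annihilator_right tri alt jacobi eA.
have pyxx : p y x x = 0 by rewrite (triprod_skew tri alt) pxyx oppr0.
have pyxy : p y x y = 0 by rewrite (triprod_skew tri alt) pxyy oppr0.
apply: (trilinear_span_memv (triprod_trilinear_map tri)) (span_xye _ (memvf u))
  (span_xye _ (memvf v)) (span_xye _ (memvf w)) => u' v' w'.
rewrite !inE => /or3P[]/eqP-> /or3P[]/eqP-> /or3P[]/eqP->;
  by rewrite ?alt ?eA ?eB ?eC ?pxyx ?pxyy ?pyxx ?pyxy mem0v.
Qed.

Lemma compl_vline_span e : e != 0 -> exists x y : V, (fullv <= <<[:: x; y; e]>>)%VS.
Proof.
move=> nz_e; have sizeC : size (vbasis <[e]>^C) = 2.
  by rewrite size_tuple dimv_compl dimV dim_vline nz_e.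
move: (span_basis (vbasisP <[e]>^C)) sizeC.
case: (vbasis _ : seq V) => [|x [|y [|? ?]]] //= spanC _.
exists x, y; rewrite -(addv_complf <[e]>) -spanC.
by rewrite (span_cat [:: x; y] [:: e]) span_seq1 addvC.
Qed.

Hypothesis nil : nilpotent_LTS p.

Lemma nilpotent_dim3_classification : abelian_TS p \/ LTS_iso p (@T32 F).
Proof.
set W := bracket p fullv.
have [W0 | nzW] := eqVneq W 0%VS.
  by left=> x y z; apply/eqP; rewrite -memv0 -/W -W0 memv_bracket ?memvf.
have dimW : \dim W = 1%N.
  apply/eqP; rewrite eqn_leq lt0n dimv_eq0 nzW andbT leqNgt; apply/negP => dimW2.
  by move/eqP: nzW; apply; apply: (bracket_fullv_codim1_eq0 tri alt nil); rewrite dimV.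
pose e := vpick W; have We : (W <= <[e]>)%VS by rewrite dimv_le1_vline ?dimW.
have eA u v : p e u v = 0.
  have bW0 : bracket p W = 0%VS.
    apply/eqP; rewrite -dimv_eq0 -leqn0 -ltnS -dimW.
    by rewrite (bracket_proper tri nil nzW) // bracketS ?subvf.
  by apply/eqP; rewrite -memv0 -bW0 memv_bracket ?memv_pick.
have [x [y span_xye]] : exists x y : V, (fullv <= <<[:: x; y; e]>>)%VS.
  by apply: compl_vline_span; rewrite vpick0.
have [a pxyx] := vlineP _ _ (subvP We _ (memv_bracket tri y x (memvf x))).
have [b pxyy] := vlineP _ _ (subvP We _ (memv_bracket tri y y (memvf x))).
have [a0 | nz_a] := eqVneq a 0.
  2: by right; apply: (T32_of_span span_xye eA pxyx pxyy).
have [b0 | nz_b] := eqVneq b 0.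
  by left; apply: (abelian_of_span span_xye eA); rewrite ?pxyx ?pxyy ?a0 ?b0 scale0r.
right; apply: (@T32_of_span y x e (- b) (- a)) => //.
- apply: subv_trans span_xye _; apply/span_subvP => v xye_v.
  by apply: memv_span; move: xye_v; rewrite !inE orbCA.
- by rewrite (triprod_skew tri alt) pxyy scaleNr.
- by rewrite (triprod_skew tri alt) pxyx scaleNr.
- by rewrite oppr_eq0.
Qed.

End Dimension3.

Theorem mainTheorem3 (F : fieldType) (V : vectType F) (p : triprod V) :
  ~~ (2 \in [pchar F])%N ->
  is_LTS p -> nilpotent_LTS p -> \dim (fullv : {vspace V}) = 3%N ->
  (LTS_iso p (@T31 F) /\ ~ LTS_iso p (@T32 F)) \/
  (~ LTS_iso p (@T31 F) /\ LTS_iso p (@T32 F)).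
Proof.
move=> _ [tri alt jacobi _] nil dimV.
have T31_abelian : abelian_TS (@T31 F) by [].
have [p_ab | p_T32] := nilpotent_dim3_classification tri alt jacobi dimV nil.
  left; split; first exact: abelian_iso_T31.
  by case/LTS_iso_abelian => /(_ p_ab) /T32_nonabelian.
right; split=> //; case/LTS_iso_abelian => _ /(_ T31_abelian) p_ab.
by apply: T32_nonabelian; apply/(LTS_iso_abelian p_T32).
Qed.
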